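(* For any input distribution $\mathcal{D}$ and any $n,k\ge1$, $p\in[0,1]$, there exists a deterministic algorithm (which may depend on $\mathcal{D}$) for searching an element $z$, sampled from $\mathcal{D}$, in an unsorted list of length $n$, that runs in $k$ rounds, has success probability at least $p$, and issues at most $np\bigl(1-\frac{k-1}{2k}p\bigr)+1$ comparisons in expectation.
   Context: Unordered search in the comparison model: an array $\vec{x}=(x_1,\ldots,x_n)$ of distinct elements in no particular order and a target $z$ equal to exactly one entry $x_\ell$; $\mathcal{D}$ is a probability distribution over which entry $z$ is. Queries ask ''How is $a$ compared to $b$?'' for $a,b\in\{x_1,\ldots,x_n,z\}$, with answer ''$<$'', ''$=$'' or ''$>$''; the goal is to output $\ell$. An algorithm runs in $k$ rounds if in each of $k$ rounds it submits a set of queries chosen depending only on answers of earlier rounds, then receives all answers. *)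

From HB Require Import structures.
From mathcomp Require Import all_boot all_order all_algebra.
Set Implicit Arguments. Unset Strict Implicit. Unset Printing Implicit Defensive.
Import Order.TTheory GRing.Theory Num.Theory.

(* The comparable items: [None] is the target z, [Some i] is the entry x_i. *)
Definition item (n : nat) := option 'I_n.

Definition query (n : nat) := (item n * item n)%type.

Definition answer := comparison.

(* A history: the list of completed rounds, each round being the list of
   queries submitted in that round together with their answers. *)
Definition history (n : nat) := seq (seq (query n * answer)).

Record algorithm (n : nat) := Algorithm {
  next_queries : history n -> seq (query n);
  output : history n -> 'I_n
}.

Definition item_val (n : nat) (d : Order.disp_t) (T : orderType d)
  (x : 'I_n -> T) (l : 'I_n) (a : item n) : T :=
  match a with None => x l | Some i => x i end.

Definition answer_of (n : nat) (d : Order.disp_t) (T : orderType d)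
  (x : 'I_n -> T) (l : 'I_n) (q : query n) : answer :=
  let va := item_val x l q.1 in
  let vb := item_val x l q.2 in
  if (va < vb)%O then Lt else if va == vb then Eq else Gt.

Fixpoint run (n : nat) (A : algorithm n) (d : Order.disp_t) (T : orderType d)
  (x : 'I_n -> T) (l : 'I_n) (r : nat) : history n :=
  match r with
  | 0 => [::]
  | r'.+1 =>
      let h := run A x l r' in
      h ++ [:: [seq (q, answer_of x l q) | q <- next_queries A h]]
  end.

Definition result (n : nat) (A : algorithm n) (d : Order.disp_t) (T : orderType d)
  (x : 'I_n -> T) (l : 'I_n) (k : nat) : 'I_n :=
  output A (run A x l k).

Definition cost (n : nat) (A : algorithm n) (d : Order.disp_t) (T : orderType d)
  (x : 'I_n -> T) (l : 'I_n) (k : nat) : nat :=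
  sumn [seq size rd | rd <- run A x l k].

Definition is_distribution (R : realFieldType) (n : nat) (D : 'I_n -> R) : Prop :=
  (forall i, 0 <= D i)%R /\ (\sum_(i < n) D i = 1)%R.

Definition success_prob (R : realFieldType) (n : nat) (D : 'I_n -> R)
  (A : algorithm n) (d : Order.disp_t) (T : orderType d) (x : 'I_n -> T)
  (k : nat) : R :=
  (\sum_(l < n | result A x l k == l) D l)%R.

Definition expected_cost (R : realFieldType) (n : nat) (D : 'I_n -> R)
  (A : algorithm n) (d : Order.disp_t) (T : orderType d) (x : 'I_n -> T)
  (k : nat) : R :=
  (\sum_(l < n) D l * (cost A x l k)%:R)%R.

From HB Require Import structures.
From mathcomp Require Import all_boot all_order all_algebra.
From mathcomp Require Import ring lra.
Import Order.TTheory GRing.Theory Num.Theory.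
Set Implicit Arguments. Unset Strict Implicit. Unset Printing Implicit Defensive.

(* Rank the positions by decreasing probability and pick m < n with
   m <= n p <= m + 1.  The algorithm compares z with the entries of the m most
   likely positions, split into k consecutive blocks of q = m %/ k + 1 ranks, one block
   per round, stops as soon as z is found, and otherwise outputs the entry of
   rank m.  It thus succeeds on the m + 1 most likely positions, whose mass is at
   least (m + 1) / n >= p.
   If the target has rank t, the comparisons made are those with the ranks
   u < m not lying in a later block than t.  Counting over ordered pairs
   (t, u), twice the total cost is at most 2 n m - m^2 + m q, and as the cost
   increases with t while the probability decreases, Chebyshev's sum inequality
   bounds the expected cost by the average (2 n m - m^2 + m q) / (2 n), which is
   at most n p (1 - (k - 1) p / (2 k)) + 1. *)

Lemma sum_ord_ltn n m : (m <= n)%N -> \sum_(u < n) (u < m) = m.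
Proof.
move=> le_mn; rewrite -big_mkcond /= -(big_ord_widen n (fun=> 1%N) le_mn).
by rewrite sum1_card card_ord.
Qed.

Lemma sum_ord_divn_eq_le n q a : 0 < q -> \sum_(u < n) (u %/ q == a) <= q.
Proof.
move=> q_gt0.
have -> : \sum_(u < n) (u %/ q == a) = #|[pred u : 'I_n | u %/ q == a]|.
  by rewrite -sum1_card [RHS]big_mkcond; apply: eq_bigr => u _; rewrite inE; case: eqP.
rewrite -[leqRHS]card_ord.
apply: (@leq_card_in _ _ (fun u : 'I_n => Ordinal (ltn_pmod u q_gt0))).
move=> u v; rewrite !inE => /eqP eq_u /eqP eq_v [eq_mod]; apply: val_inj.
by rewrite /= (divn_eq u q) (divn_eq v q) eq_u eq_v eq_mod.
Qed.

Section RealFacts.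
Variable R : realFieldType.
Local Open Scope ring_scope.

Lemma chebyshev_sum_le n (a c : 'I_n -> R) :
  (forall t u : 'I_n, (t <= u)%N -> a u <= a t) ->
  (forall t u : 'I_n, (t <= u)%N -> c t <= c u) ->
  n%:R * (\sum_t a t * c t) <= (\sum_t a t) * (\sum_t c t).
Proof.
move=> a_dec c_inc.
have opposite t u : (a t - a u) * (c t - c u) <= 0.
  have [le_tu|/ltnW le_ut] := leqP t u.
    by rewrite mulr_ge0_le0 // ?subr_ge0 ?subr_le0 ?a_dec ?c_inc.
  by rewrite mulr_le0_ge0 // ?subr_ge0 ?subr_le0 ?a_dec ?c_inc.
have : \sum_t \sum_u (a t - a u) * (c t - c u) <= 0.
  by apply: sumr_le0 => t _; apply: sumr_le0.
have expand t : \sum_u (a t - a u) * (c t - c u) =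
    n%:R * (a t * c t) + \sum_u a u * c u - a t * \sum_u c u - c t * \sum_u a u.
  rewrite (eq_bigr (fun u => a t * c t + a u * c u - a t * c u - c t * a u)) => [|u _].
    by rewrite !sumrB big_split /= sumr_const card_ord -!mulr_sumr mulr_natl.
  by ring.
under eq_bigr do rewrite expand.
rewrite !sumrB big_split /= sumr_const card_ord -mulr_natl -mulr_sumr -!mulr_suml.
lra.
Qed.

Lemma prefix_mass_ge n m (a : 'I_n -> R) :
  (forall t u : 'I_n, (t <= u)%N -> a u <= a t) -> (m < n)%N ->
  m.+1%:R * (\sum_t a t) <= n%:R * (\sum_(t < n | (t <= m)%N) a t).
Proof.
move=> a_dec lt_mn.
pose c (t : 'I_n) : R := - ((t < m.+1)%N)%:R.
have := @chebyshev_sum_le n a c a_dec.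
have -> : \sum_t c t = - m.+1%:R by rewrite sumrN -natr_sum sum_ord_ltn.
have -> : \sum_t a t * c t = - \sum_(t < n | (t <= m)%N) a t.
  rewrite -sumrN [RHS]big_mkcond; apply: eq_bigr => t _.
  by rewrite /c ltnS; case: leqP; rewrite ?mulrN1 ?oppr0 ?mulr0.
rewrite mulrN mulrN lerN2 mulrC; apply=> t u le_tu.
by rewrite /c lerN2 ler_nat !ltnS; case: (leqP u m) => // le_um; rewrite (leq_trans le_tu le_um).
Qed.

Lemma exists_nonincreasing_perm n (D : 'I_n -> R) :
  exists2 pi : 'I_n -> 'I_n, injective pi &
    forall t u : 'I_n, (t <= u)%N -> D (pi u) <= D (pi t).
Proof.
pose ge_D (i j : 'I_n) := D j <= D i.
pose s := sort ge_D (enum 'I_n).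
have perm_s : perm_eq s (enum 'I_n) by rewrite perm_sort.
have size_s : size s = n by rewrite (perm_size perm_s) size_enum_ord.
have uniq_s : uniq s by rewrite (perm_uniq perm_s) enum_uniq.
have sorted_s : sorted ge_D s by apply: sort_sorted => i j; apply: le_total.
exists (fun t => nth t s t) => [t u|t u le_tu].
  rewrite (set_nth_default t u) ?size_s // => /eqP.
  by rewrite nth_uniq ?size_s // => /eqP /val_inj.
rewrite (set_nth_default t u) ?size_s //.
have ge_D_trans : transitive ge_D by move=> j i l le_ji le_lj; apply: le_trans le_lj le_ji.
have ge_D_refl : reflexive ge_D by move=> i; apply: lexx.
by apply: (sorted_leq_nth ge_D_trans ge_D_refl t sorted_s); rewrite ?inE ?size_s.
Qed.

Lemma exists_nat_floor (y : R) N : (0 < N)%N -> 0 <= y <= N%:R ->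
  exists2 m : nat, (m < N)%N & m%:R <= y <= m%:R + 1.
Proof.
elim: N => // N IH _ /andP [y_ge0 le_yN1].
have [N0|N_gt0] := posnP N.
  by move: le_yN1; rewrite N0 => le_y1; exists 0%N; rewrite // y_ge0 add0r.
have [le_yN|lt_Ny] := lerP y N%:R.
  have /(IH N_gt0) [m lt_mN ym] : 0 <= y <= N%:R by rewrite y_ge0.
  by exists m; first exact: ltnW.
by rewrite -natr1 in le_yN1; exists N; rewrite // ltW.
Qed.

Lemma expected_cost_arith (N M Q K p E : R) :
  0 < N -> 1 <= K -> 0 <= M -> M <= N * p -> p <= 1 -> Q * K <= M + K ->
  N * E * 2 + M * M <= 2 * N * M + M * Q ->
  E <= N * p * (1 - (K - 1) / (2 * K) * p) + 1.
Proof.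
move=> N_gt0 K_ge1 M_ge0 le_M_Np p_le1 le_QK sum_le.
(* y - (K - 1) y^2 / (2 K N) is nondecreasing for y <= N: compare y = N p with y = M. *)
have K2_gt0 : 0 < 2 * K by lra.
rewrite -(ler_pM2l N_gt0) -(ler_pM2l K2_gt0).
have -> : 2 * K * (N * (N * p * (1 - (K - 1) / (2 * K) * p) + 1)) =
    2 * K * N * (N * p) - (K - 1) * (N * p) ^+ 2 + 2 * K * N.
  by field; lra.
have le_Np_N : N * p <= N by rewrite ler_piMr //; lra.
have : 0 <= (N * p - M) * ((K - 1) * (2 * N - N * p - M) + 2 * N).
  by apply: mulr_ge0; [lra | nra].
have : M * (Q * K) <= M * (M + K) by apply: ler_wpM2l.
nra.
Qed.

End RealFacts.

Lemma size_run n (A : algorithm n) d (T : orderType d) (x : 'I_n -> T) l r :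
  size (run A x l r) = r.
Proof. by elim: r => //= r IH; rewrite size_cat IH addn1. Qed.

Lemma costS n (A : algorithm n) d (T : orderType d) (x : 'I_n -> T) l r :
  cost A x l r.+1 = cost A x l r + size (next_queries A (run A x l r)).
Proof. by rewrite /cost /= map_cat sumn_cat /= size_map addn0. Qed.

Section ScanAlgorithm.
Variables (n : nat) (sched : nat -> seq 'I_n) (dflt : 'I_n).

Fixpoint first_match (h : seq (query n * answer)) : option 'I_n :=
  match h with
  | [::] => None
  | ((_, Some i), Eq) :: _ => Some i
  | _ :: h' => first_match h'
  end.

Lemma first_match_cat h1 h2 :
  first_match (h1 ++ h2) = if first_match h1 is Some i then Some i else first_match h2.
Proof. by elim: h1 => //= [[[? [?|]] []] h1 IH]. Qed.

Definition scan_alg : algorithm n := Algorithm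
  (fun h => if first_match (flatten h) then [::]
            else [seq (None, Some i) | i <- sched (size h)])
  (fun h => odflt dflt (first_match (flatten h))).

Definition scanned (r : nat) : seq 'I_n := flatten (mkseq sched r).

Lemma scannedS r : scanned r.+1 = scanned r ++ sched r.
Proof. by rewrite /scanned mkseqS -cats1 flatten_cat /= cats0. Qed.

Variables (d : Order.disp_t) (T : orderType d) (x : 'I_n -> T).
Hypothesis x_inj : injective x.

Lemma first_match_probes l s :
  first_match [seq (qr, answer_of x l qr) | qr <- [seq (None, Some i) | i <- s]] =
    if l \in s then Some l else None.
Proof.
elim: s => //= i s IH; rewrite /answer_of /= in_cons.
have [<-|ne_il] := eqVneq i l; first by rewrite ltxx eqxx.
have ne_x : x l != x i by apply: contraNneq ne_il => /x_inj ->.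
by rewrite (negbTE ne_x) /=; case: (x l < x i)%O.
Qed.

Lemma first_match_run l r :
  first_match (flatten (run scan_alg x l r)) = if l \in scanned r then Some l else None.
Proof.
elim: r => //= r IH.
rewrite flatten_cat first_match_cat IH scannedS mem_cat size_run.
case: (l \in scanned r) => //=.
by rewrite cats0 first_match_probes.
Qed.

Lemma result_scan_alg l k : result scan_alg x l k = if l \in scanned k then l else dflt.
Proof. by rewrite /result /= first_match_run; case: ifP. Qed.

Lemma cost_scan_alg l k :
  cost scan_alg x l k = \sum_(j < k) (l \notin scanned j) * size (sched j).
Proof.
elim: k => [|k IH]; first by rewrite big_ord0.
rewrite costS IH big_ord_recr /= first_match_run size_run.
by case: (l \in scanned k); rewrite /= ?size_map ?mul1n ?addn0.
Qed.

End ScanAlgorithm.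

(* Rank u < m is probed in round u %/ q, unless the target has a rank t < m
   in an earlier round. *)
Definition scan_cost (m q n t : nat) : nat :=
  \sum_(u < n) ((u < m) && ~~ ((t < m) && (t %/ q < u %/ q))).

Section ScanCost.
Variables (m q n : nat).

Lemma scan_cost_homo t t' : t <= t' -> scan_cost m q n t <= scan_cost m q n t'.
Proof.
move=> le_tt'; apply: leq_sum => u _; case: (u < m) => //=.
case/boolP: ((t' < m) && (t' %/ q < u %/ q)); last by rewrite leq_b1.
case/andP=> lt_t'm lt_t'u.
by rewrite (leq_ltn_trans le_tt' lt_t'm) (leq_ltn_trans (leq_div2r q le_tt') lt_t'u).
Qed.

Lemma sum_rounds_scan_cost k t : 0 < q -> m <= q * k ->
  \sum_(j < k) ~~ ((t < m) && (t %/ q < j)) * \sum_(u < n) ((u < m) && (u %/ q == j))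
  = scan_cost m q n t.
Proof.
move=> q_gt0 le_m_qk; under eq_bigr do rewrite big_distrr /=.
rewrite exchange_big /=; apply: eq_bigr => u _.
have [lt_um|] := ltnP u m; last by rewrite big1 // => j _; rewrite muln0.
transitivity (\sum_(j < k | j == u %/ q :> nat) (~~ ((t < m) && (t %/ q < j)) : nat)).
  rewrite [RHS]big_mkcond; apply: eq_bigr => j _.
  by rewrite /= eq_sym mulnbr.
by rewrite (big_ord1_eq _ (fun j => ~~ ((t < m) && (t %/ q < j)) : nat))
  ltn_divLR // mulnC (leq_trans lt_um le_m_qk).
Qed.

Lemma sum_scan_cost : 0 < q -> m <= n ->
  (\sum_(t < n) scan_cost m q n t) * 2 + m * m <= 2 * n * m + m * q.
Proof.
move=> q_gt0 le_mn.
pose w t u : nat := (u < m) && ~~ ((t < m) && (t %/ q < u %/ q)).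
pose both t u : nat := (t < m) * (u < m).
have pair t u : w t u + w u t + both t u =
    (t < m) + (u < m) + both t u * (t %/ q == u %/ q).
  by rewrite /w /both; case: (t < m); case: (u < m) => //=; case: ltngtP.
have sum_w : (\sum_(t < n) scan_cost m q n t) * 2 =
    \sum_(t < n) \sum_(u < n) (w t u + w u t).
  rewrite muln2 -addnn [X in _ + X]exchange_big -big_split /=.
  by apply: eq_bigr => t _; rewrite big_split.
have sum_both : \sum_(t < n) \sum_(u < n) both t u = m * m.
  by rewrite -[in RHS](sum_ord_ltn le_mn) big_distrlr.
have sum_ind : \sum_(t < n) \sum_(u < n) ((t < m) + (u < m)) = 2 * n * m.
  under eq_bigr do rewrite big_split /= sum_ord_ltn // sum_nat_const card_ord.
  rewrite big_split /= -big_distrr sum_ord_ltn // sum_nat_const card_ord.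
  by rewrite -mulnA mul2n -addnn.
have sum_same : \sum_(t < n) \sum_(u < n) both t u * (t %/ q == u %/ q) <= m * q.
  rewrite -[in leqRHS](sum_ord_ltn le_mn) big_distrl /=; apply: leq_sum => t _.
  rewrite /both; case: (t < m); last by rewrite big1.
  rewrite mul1n; apply: leq_trans (sum_ord_divn_eq_le n (t %/ q) q_gt0).
  apply: leq_sum => u _.
  by rewrite mul1n eq_sym; case: (u < m); case: (_ == _).
rewrite sum_w -sum_both -big_split /=.
under eq_bigr do rewrite -big_split /=.
under eq_bigr do under eq_bigr do rewrite pair.
by under eq_bigr do rewrite big_split /=; rewrite big_split /= sum_ind leq_add2l.
Qed.
End ScanCost.

Section BlockSearch.
Variables (n : nat) (pi : 'I_n -> 'I_n) (m q : nat).

Definition block_sched (j : nat) : seq 'I_n :=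
  [seq pi u | u <- [seq u : 'I_n <- enum 'I_n | (u < m) && (u %/ q == j)]].

Hypothesis pi_inj : injective pi.

Lemma mem_scanned_block_sched t r :
  (pi t \in scanned block_sched r) = (t < m) && (t %/ q < r).
Proof.
elim: r => [|r IH]; first by rewrite andbF.
rewrite scannedS mem_cat IH mem_map // mem_filter mem_enum andbT.
by rewrite -andb_orr orbC -leq_eqVlt.
Qed.

Lemma size_block_sched j :
  size (block_sched j) = \sum_(u < n) ((u < m) && (u %/ q == j)).
Proof. by rewrite size_map size_filter -sum1_count big_enum_cond big_mkcond. Qed.

Variables (k : nat) (lt_mn : m < n).
Hypotheses (q_gt0 : 0 < q) (le_m_qk : m <= q * k).

Definition block_search : algorithm n := scan_alg block_sched (pi (Ordinal lt_mn)).

Variables (d : Order.disp_t) (T : orderType d) (x : 'I_n -> T).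
Hypothesis x_inj : injective x.

Lemma result_block_search (t : 'I_n) : t <= m -> result block_search x (pi t) k = pi t.
Proof.
rewrite leq_eqVlt => /predU1P [eq_tm|lt_tm]; rewrite result_scan_alg //.
  by case: ifP => // _; congr pi; apply: val_inj.
by rewrite mem_scanned_block_sched lt_tm ltn_divLR // mulnC (leq_trans lt_tm le_m_qk).
Qed.

Lemma cost_block_search (t : 'I_n) : cost block_search x (pi t) k = scan_cost m q n t.
Proof.
rewrite cost_scan_alg // -(sum_rounds_scan_cost n t q_gt0 le_m_qk).
by apply: eq_bigr => j _; rewrite mem_scanned_block_sched size_block_sched.
Qed.

End BlockSearch.

Local Open Scope ring_scope.

Section BlockSearchAnalysis.
Variables (R : realFieldType) (n : nat) (D : 'I_n -> R) (pi : 'I_n -> 'I_n).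
Variables (m q k : nat) (lt_mn : (m < n)%N).
Hypotheses (D_ge0 : forall i, 0 <= D i) (D_sum1 : \sum_i D i = 1).
Hypothesis pi_inj : injective pi.
Hypothesis D_pi : forall t u : 'I_n, (t <= u)%N -> D (pi u) <= D (pi t).
Hypotheses (q_gt0 : (0 < q)%N) (le_m_qk : (m <= q * k)%N).
Variables (d : Order.disp_t) (T : orderType d) (x : 'I_n -> T).
Hypothesis x_inj : injective x.

Let D_pi_sum1 : \sum_t D (pi t) = 1.
Proof. by rewrite -D_sum1 [RHS](reindex_inj pi_inj). Qed.

Lemma success_prob_block_search :
  m.+1%:R <= n%:R * success_prob D (block_search pi q lt_mn) x k.
Proof.
have := prefix_mass_ge D_pi lt_mn; rewrite D_pi_sum1 mulr1 => /le_trans; apply.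
rewrite ler_wpM2l // /success_prob [leRHS](reindex_inj pi_inj).
rewrite [leLHS]big_mkcond [leRHS]big_mkcond.
apply: ler_sum => t _; case: leqP => [le_tm|_]; last by case: ifP.
by rewrite result_block_search // eqxx.
Qed.

Lemma expected_cost_block_search :
  n%:R * expected_cost D (block_search pi q lt_mn) x k * 2 + m%:R * m%:R
    <= 2 * n%:R * m%:R + m%:R * q%:R.
Proof.
rewrite /expected_cost (reindex_inj pi_inj).
under eq_bigr do rewrite cost_block_search //.
have cheb : n%:R * (\sum_(t < n) D (pi t) * (scan_cost m q n t)%:R)
    <= (\sum_(t < n) scan_cost m q n t)%:R.
  have := chebyshev_sum_le D_pi (c := fun t => (scan_cost m q n t)%:R).
  by rewrite D_pi_sum1 mul1r -natr_sum; apply=> t u le_tu; rewrite ler_nat scan_cost_homo.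
have := sum_scan_cost q_gt0 (ltnW lt_mn); rewrite -(ler_nat R) !natrD !natrM.
lra.
Qed.

End BlockSearchAnalysis.

Theorem proposition11 (R : realFieldType) (n k : nat) (D : 'I_n -> R) (p : R) :
  (1 <= n)%N -> (1 <= k)%N -> is_distribution D -> 0 <= p <= 1 ->
  exists A : algorithm n,
    forall (d : Order.disp_t) (T : orderType d) (x : 'I_n -> T),
      injective x ->
      p <= success_prob D A x k /\
      expected_cost D A x k <=
        n%:R * p * (1 - (k%:R - 1) / (2 * k%:R) * p) + 1.
Proof.
move=> n_ge1 k_ge1 [D_ge0 D_sum1] /andP [p_ge0 p_le1].
have n_gt0 : 0 < n%:R :> R by rewrite ltr0n.
have [pi pi_inj D_pi] := exists_nonincreasing_perm D.
have [m lt_mn /andP [le_m_np le_np_m1]] :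
    exists2 m, (m < n)%N & m%:R <= n%:R * p <= m%:R + 1.
  by apply: exists_nat_floor; rewrite // mulr_ge0 //= ler_piMr.
pose q := (m %/ k).+1.
have q_gt0 : (0 < q)%N by [].
have le_m_qk : (m <= q * k)%N.
  by rewrite /q mulSn addnC {1}(divn_eq m k) leq_add2l ltnW // ltn_pmod.
have le_qk : q%:R * k%:R <= m%:R + k%:R :> R.
  by rewrite -natrM -natrD ler_nat /q mulSn addnC leq_add2r leq_divM.
exists (block_search pi q lt_mn) => d T x x_inj; split.
  have := success_prob_block_search lt_mn D_ge0 D_sum1 pi_inj D_pi q_gt0 le_m_qk x_inj.
  rewrite -natr1 => succ; rewrite -(ler_pM2l n_gt0); exact: le_trans le_np_m1 succ.
have := expected_cost_block_search lt_mn D_sum1 pi_inj D_pi q_gt0 le_m_qk x_inj.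
by apply: expected_cost_arith; rewrite ?ler1n.
Qed.
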